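(* Let $f:[0,\infty)\to\mathbb{R}$ be differentiable, let $0<a<b<\infty$, and suppose $f'$ is Lebesgue integrable on $[a,b]$. Let $m\in(0,1]$ and $q\ge1$, and suppose $|f'|^q$ is $(1,m)$-GA-convex on $[0,\max\{a^{1/m},b\}]$. Then \[ \biggl|\frac{b^2f(b)-a^2f(a)}{2}-\int_a^b xf(x)\,dx\biggr|\le\frac{(b^3-a^3)^{1-1/q}}{6}\Bigl\{m\bigl[L(a^3,b^3)-a^3\bigr]\bigl|f'(a^{1/m})\bigr|^q+\bigl[b^3-L(a^3,b^3)\bigr]|f'(b)|^q\Bigr\}^{1/q}. \]
   Context: For $c>0$, $h:[0,c]\to\mathbb{R}$ and $(\alpha,m)\in(0,1]^2$, $h$ is called $(\alpha,m)$-GA-convex on $[0,c]$ if $h\bigl(x^\lambda y^{m(1-\lambda)}\bigr)\le\lambda^\alpha h(x)+m(1-\lambda^\alpha)h(y)$ for all $x,y\in[0,c]$ and all $\lambda\in[0,1]$ (with the convention $0^0=1$). For $x,y>0$, $x\neq y$, the logarithmic mean is $L(x,y)=\frac{y-x}{\ln y-\ln x}$. *)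

From Stdlib Require Import Reals Lra.
Open Scope R_scope.

(* Real power for a nonnegative base, with the conventions 0^0 = 1 and
   0^y = 0 for y <> 0 (only used with y >= 0). *)
Definition rpow (x y : R) : R :=
  if Rlt_dec 0 x then Rpower x y
  else if Req_EM_T y 0 then 1 else 0.

Definition GA_convex (alpha m c : R) (h : R -> R) : Prop :=
  forall x y lam, 0 <= x <= c -> 0 <= y <= c -> 0 <= lam <= 1 ->
    h (rpow x lam * rpow y (m * (1 - lam)))
      <= rpow lam alpha * h x + m * (1 - rpow lam alpha) * h y.

Definition logmean (x y : R) : R := (y - x) / (ln y - ln x).

Definition right_deriv (f : R -> R) (x l : R) : Prop :=
  forall eps, 0 < eps -> exists delta, 0 < delta /\
    forall h, 0 < h < delta -> Rabs ((f (x + h) - f x) / h - l) < eps.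

From Stdlib Require Import Reals Lra Psatz.
From Coquelicot Require Import Coquelicot.
Open Scope R_scope.

(* Put F(y) = y^2 f(y)/2 - int_a^y s f(s) ds, so that
   F' = x^2 f'/2 and the left-hand side is |F(b) - F(a)|.  Writing
   x = b^t a^(1-t) with t = log_weight a b x, (1,m)-GA-convexity gives
   |f'(x)|^q <= h(x) := t A + m (1-t) B, where A = |f'(b)|^q and
   B = |f'(a^(1/m))|^q.  Instead of Hoelder's inequality for integrals we
   use its pointwise form: the tangent line of v |-> v^(1/q) at a level
   K > 0 gives |f'(x)| <= k (h(x)/(qK) + 1 - 1/q) with k = K^(1/q).  This
   bound times x^2/2 is the derivative of an elementary [majorant], and a
   mean-value comparison yields |F(b) - F(a)| <= majorant(b) - majorant(a);
   for K = S/(b^3-a^3), S = [endpoint_mass], this increment is exactly the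
   claimed bound (the case S <= 0 forces f' = 0 on [a,b]). *)

Lemma rpow_pos x y : 0 < x -> rpow x y = Rpower x y.
Proof. intros H; unfold rpow; destruct (Rlt_dec 0 x); [reflexivity | lra]. Qed.

Lemma rpow_ge0 x y : 0 <= rpow x y.
Proof.
  unfold rpow; destruct (Rlt_dec 0 x).
  - left; apply exp_pos.
  - destruct (Req_EM_T y 0); lra.
Qed.

Lemma rpow_1 t : 0 <= t -> rpow t 1 = t.
Proof.
  intros [H | <-].
  - rewrite rpow_pos by lra; apply Rpower_1; lra.
  - unfold rpow; destruct (Rlt_dec 0 0); [lra |].
    destruct (Req_EM_T 1 0); lra.
Qed.

Lemma rpow_le0_eq0 w q : 0 <= w -> rpow w q <= 0 -> w = 0.
Proof.
  intros [Hw | <-] Hle; [| reflexivity].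
  rewrite rpow_pos in Hle by lra.
  pose proof (exp_pos (q * ln w)); unfold Rpower in Hle; lra.
Qed.

Lemma rpow_split D S q : 0 < D -> 0 < S ->
  D * Rpower (S / D) (1 / q) = rpow D (1 - 1 / q) * rpow S (1 / q).
Proof.
  intros HD HS; rewrite !rpow_pos by lra; unfold Rpower.
  rewrite ln_div by lra.
  replace (1 / q * (ln S - ln D)) with (1 / q * ln S + - (1 / q * ln D)) by ring.
  replace ((1 - 1 / q) * ln D) with (ln D + - (1 / q * ln D)) by ring.
  rewrite !exp_plus, exp_ln by lra; ring.
Qed.

Lemma bernoulli_rpower v q : 0 < v -> 1 <= q -> 1 + q * (v - 1) <= Rpower v q.
Proof.
  intros Hv Hq; unfold Rpower.
  set (s := ln v).
  assert (Ev : v = exp s) by (unfold s; rewrite exp_ln; auto).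
  rewrite Ev.
  replace (q * s) with (s + (q - 1) * s) by ring; rewrite exp_plus.
  pose proof (exp_ineq1_le ((q - 1) * s)).
  pose proof (exp_ineq1_le (- s)).
  assert (exp (- s) * exp s = 1)
    by (rewrite <- exp_plus; replace (- s + s) with 0 by ring; apply exp_0).
  pose proof (exp_pos s).
  assert (0 <= s * exp s - exp s + 1) by nra.
  nra.
Qed.

(* Pointwise Hoelder: if w^q <= h then w lies below the tangent line of
   the concave map v |-> v^(1/q) at the level K = k^q. *)
Lemma rpow_root_tangent w k K h q : 0 <= w -> 0 < k -> 1 <= q ->
  Rpower k q = K -> rpow w q <= h -> w <= k * (h / (q * K) + 1 - 1 / q).
Proof.
  intros Hw Hk Hq HK Hh.
  assert (HKp : 0 < K) by (rewrite <- HK; apply exp_pos).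
  assert (Hh0 : 0 <= h) by (pose proof (rpow_ge0 w q); lra).
  destruct Hw as [Hw | <-].
  - rewrite rpow_pos in Hh by lra.
    assert (Hv : 0 < w / k) by (apply Rdiv_lt_0_compat; lra).
    pose proof (bernoulli_rpower (w / k) q Hv Hq) as Hbern.
    assert (Hquot : Rpower (w / k) q = Rpower w q / K).
    { rewrite <- HK; unfold Rpower; rewrite ln_div by lra.
      replace (q * (ln w - ln k)) with (q * ln w + - (q * ln k)) by ring.
      rewrite exp_plus, exp_Ropp; reflexivity. }
    rewrite Hquot in Hbern.
    assert (Rpower w q / K <= h / K)
      by (apply Rmult_le_compat_r; [left; apply Rinv_0_lt_compat |]; lra).
    apply Rmult_le_reg_l with (q / k); [apply Rdiv_lt_0_compat; lra |].
    replace (q / k * w) with (q * (w / k)) by (field; lra).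
    replace (q / k * (k * (h / (q * K) + 1 - 1 / q))) with (h / K + q - 1)
      by (field; repeat split; lra).
    lra.
  - assert (0 <= h / (q * K)) by (apply Rdiv_le_0_compat; nra).
    assert (1 / q <= 1)
      by (unfold Rdiv; rewrite Rmult_1_l, <- Rinv_1; apply Rinv_le_contravar; lra).
    nra.
Qed.

Lemma logmean_between x y : 0 < x < y -> x < logmean x y < y.
Proof.
  intros [Hx Hxy]; unfold logmean.
  assert (Hl : 0 < ln y - ln x) by (pose proof (ln_increasing x y Hx Hxy); lra).
  assert (Hexp : exp (ln y - ln x) = y / x).
  { rewrite <- ln_div by lra; apply exp_ln, Rdiv_lt_0_compat; lra. }
  pose proof (exp_ineq1 (ln y - ln x) ltac:(lra)) as Hup.
  pose proof (exp_ineq1 (- (ln y - ln x)) ltac:(lra)) as Hdown.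
  rewrite exp_Ropp, Hexp, Rinv_div in Hdown; rewrite Hexp in Hup.
  assert (x * (1 + (ln y - ln x)) < y).
  { apply Rmult_lt_reg_r with (/ x); [apply Rinv_0_lt_compat; lra |].
    replace (x * (1 + (ln y - ln x)) * / x) with (1 + (ln y - ln x)) by (field; lra).
    exact Hup. }
  assert (y * (1 - (ln y - ln x)) < x).
  { apply Rmult_lt_reg_r with (/ y); [apply Rinv_0_lt_compat; lra |].
    replace (y * (1 - (ln y - ln x)) * / y) with (1 - (ln y - ln x)) by (field; lra).
    unfold Rdiv in Hdown; lra. }
  split; apply Rmult_lt_reg_r with (ln y - ln x); auto;
    unfold Rdiv; rewrite Rmult_assoc, Rinv_l by lra; lra.
Qed.

Lemma cube_lt a b : 0 < a < b -> a ^ 3 < b ^ 3.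
Proof. intros [Ha Hab]; assert (0 < a * b) by nra; simpl; nra. Qed.

Lemma logmean_cubes a b : 0 < a < b ->
  logmean (a ^ 3) (b ^ 3) = (b ^ 3 - a ^ 3) / (3 * (ln b - ln a)).
Proof.
  intros [Ha Hab]; unfold logmean; rewrite !ln_pow by lra.
  replace (INR 3) with 3 by (simpl; ring).
  assert (ln a < ln b) by (apply ln_increasing; lra).
  field; lra.
Qed.

(* The exponent t with x = b^t a^(1-t): the parameter of GA-convexity. *)
Definition log_weight (a b x : R) : R := (ln x - ln a) / (ln b - ln a).

Lemma GA_convex_log_interpolation (fp : R -> R) a b m q x :
  0 < a -> a < b -> 0 < m ->
  GA_convex 1 m (Rmax (rpow a (1 / m)) b) (fun x => rpow (Rabs (fp x)) q) ->
  a <= x <= b ->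
  rpow (Rabs (fp x)) q <=
    log_weight a b x * rpow (Rabs (fp b)) q
    + m * (1 - log_weight a b x) * rpow (Rabs (fp (rpow a (1 / m)))) q.
Proof.
  intros Ha Hab Hm Hconv Hx.
  assert (ln a < ln b) by (apply ln_increasing; lra).
  assert (ln a <= ln x)
    by (destruct (Req_dec a x); [subst; lra | left; apply ln_increasing; lra]).
  assert (ln x <= ln b)
    by (destruct (Req_dec x b); [subst; lra | left; apply ln_increasing; lra]).
  set (t := log_weight a b x).
  assert (Ht : 0 <= t <= 1).
  { unfold t, log_weight; split; [apply Rdiv_le_0_compat; lra |].
    apply (Rmult_le_reg_r (ln b - ln a)); [lra |].
    unfold Rdiv; rewrite Rmult_assoc, Rinv_l; lra. }
  assert (Hroot : 0 < rpow a (1 / m)) by (rewrite rpow_pos by lra; apply exp_pos).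
  assert (Hgeo : rpow b t * rpow (rpow a (1 / m)) (m * (1 - t)) = x).
  { rewrite (rpow_pos b), (rpow_pos (rpow a (1 / m))), (rpow_pos a), Rpower_mult
      by lra.
    unfold Rpower; rewrite <- exp_plus.
    replace (t * ln b + 1 / m * (m * (1 - t)) * ln a) with (ln x)
      by (unfold t, log_weight; field; lra).
    apply exp_ln; lra. }
  specialize (Hconv b (rpow a (1 / m)) t).
  simpl in Hconv; rewrite rpow_1, Hgeo in Hconv by lra.
  apply Hconv; [split; [lra | apply Rmax_r] | split; [lra | apply Rmax_l] | exact Ht].
Qed.

Lemma xf_continuous (f fp : R -> R) y :
  (forall x, 0 < x -> derivable_pt_lim f x (fp x)) -> 0 < y ->
  continuous (fun s => s * f s) y.
Proof.
  intros Hd Hy; apply (continuous_mult (fun s => s) f); [apply continuous_id |].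
  apply continuity_pt_filterlim, derivable_continuous_pt.
  exists (fp y); apply Hd; auto.
Qed.

Lemma boundary_term_deriv (f fp : R -> R) a x :
  0 < a -> (forall x, 0 < x -> derivable_pt_lim f x (fp x)) -> 0 < x ->
  derivable_pt_lim (fun y => y ^ 2 * f y / 2 - RInt (fun s => s * f s) a y) x
    (x ^ 2 * fp x / 2).
Proof.
  intros Ha Hd Hx; apply is_derive_Reals.
  replace (x ^ 2 * fp x / 2) with ((2 * x * f x + x ^ 2 * fp x) / 2 - x * f x)
    by field.
  apply (is_derive_minus (fun y => y ^ 2 * f y / 2)
           (fun y => RInt (fun s => s * f s) a y)).
  - apply (is_derive_scal_l (fun y => y ^ 2 * f y) _ _ (/ 2)), is_derive_Reals.
    replace (2 * x * f x + x ^ 2 * fp x)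
      with (INR 2 * x ^ (pred 2) * f x + x ^ 2 * fp x) by (simpl; ring).
    apply (derivable_pt_lim_mult (fun y => y ^ 2) f x);
      [apply derivable_pt_lim_pow | apply Hd; auto].
  - apply (is_derive_RInt (fun s => s * f s) _ a x).
    + apply (locally_interval _ x 0 p_infty); simpl; auto.
      intros y Hy _.
      apply (@RInt_correct R_CompleteNormedModule),
        (@ex_RInt_continuous R_CompleteNormedModule).
      intros z [Hz _]; apply (xf_continuous f fp); auto.
      unfold Rmin in Hz; destruct (Rle_dec a y); lra.
    + apply (xf_continuous f fp); auto.
Qed.

(* Derivative comparison: if |F'| <= Phi' on [a,b] then
   |F(b) - F(a)| <= Phi(b) - Phi(a)  (mean value theorem for Phi +- F). *)
Lemma deriv_comparison (F g Phi phi : R -> R) a b : a < b ->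
  (forall x, a <= x <= b -> derivable_pt_lim F x (g x)) ->
  (forall x, a <= x <= b -> derivable_pt_lim Phi x (phi x)) ->
  (forall x, a <= x <= b -> Rabs (g x) <= phi x) ->
  Rabs (F b - F a) <= Phi b - Phi a.
Proof.
  intros Hab HF HPhi Hbd; apply Rabs_le; split.
  - destruct (MVT_cor2 (fun x => Phi x + F x) (fun x => phi x + g x) a b Hab)
      as [c [Ec Hc]].
    { intros c Hc; apply derivable_pt_lim_plus; auto. }
    pose proof (proj1 (Rabs_le_between _ _) (Hbd c ltac:(lra))).
    assert (0 <= (phi c + g c) * (b - a)) by (apply Rmult_le_pos; lra).
    lra.
  - destruct (MVT_cor2 (fun x => Phi x - F x) (fun x => phi x - g x) a b Hab)
      as [c [Ec Hc]].
    { intros c Hc; apply derivable_pt_lim_minus; auto. }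
    pose proof (proj1 (Rabs_le_between _ _) (Hbd c ltac:(lra))).
    assert (0 <= (phi c - g c) * (b - a)) by (apply Rmult_le_pos; lra).
    lra.
Qed.

(* The elementary majorant: an antiderivative of
   (k/2) x^2 ((t A + m (1-t) B)/(qK) + 1 - 1/q), t = log_weight a b x. *)
Definition majorant (a b m q A B k K x : R) : R :=
  k / 2 * (1 / (q * K) * (m * B * x ^ 3 / 3
    + (A - m * B) / (ln b - ln a) * (x ^ 3 * (ln x - ln a) / 3 - x ^ 3 / 9))
    + (1 - 1 / q) * x ^ 3 / 3).

Lemma majorant_deriv a b m q A B k K x : 0 < x -> ln a <> ln b -> q <> 0 ->
  K <> 0 ->
  derivable_pt_lim (majorant a b m q A B k K) x
    (k / 2 * x ^ 2 * ((log_weight a b x * A + m * (1 - log_weight a b x) * B)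
                        / (q * K) + 1 - 1 / q)).
Proof.
  intros Hx Hl Hq HK; apply is_derive_Reals; unfold majorant, log_weight.
  auto_derive; [lra |].
  field; repeat split; auto; lra.
Qed.

(* Three times the integral of x^2 (t A + m (1-t) B) over [a,b]: the
   quantity raised to the power 1/q in the theorem. *)
Definition endpoint_mass (a b m A B : R) : R :=
  m * (logmean (a ^ 3) (b ^ 3) - a ^ 3) * B + (b ^ 3 - logmean (a ^ 3) (b ^ 3)) * A.

Lemma majorant_increment a b m q A B k K : 0 < a < b -> q <> 0 ->
  endpoint_mass a b m A B <> 0 -> K = endpoint_mass a b m A B / (b ^ 3 - a ^ 3) ->
  majorant a b m q A B k K b - majorant a b m q A B k K a = k * (b ^ 3 - a ^ 3) / 6.
Proof.
  intros Hab Hq HS HK; subst K; unfold endpoint_mass in *.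
  rewrite logmean_cubes in * by lra; unfold majorant.
  assert (ln a < ln b) by (apply ln_increasing; lra).
  assert (a ^ 3 < b ^ 3) by (apply cube_lt; lra).
  rewrite Rminus_diag; field; repeat split; try lra.
  intro Hz; apply HS.
  apply Rmult_eq_reg_r with (3 * (ln b - ln a)); [| lra].
  rewrite Rmult_0_l, <- Hz; field; lra.
Qed.

Section GAEstimate.

Variables (a b m q A B : R) (F w : R -> R).
Hypotheses (Ha : 0 < a) (Hab : a < b) (Hm : 0 < m) (Hq : 1 <= q)
  (HA : 0 <= A) (HB : 0 <= B).
Hypothesis HF : forall x, a <= x <= b -> derivable_pt_lim F x (x ^ 2 * w x / 2).
Hypothesis Hw : forall x, a <= x <= b ->
  rpow (Rabs (w x)) q <= log_weight a b x * A + m * (1 - log_weight a b x) * B.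

Lemma weights_pos :
  0 < m * (logmean (a ^ 3) (b ^ 3) - a ^ 3) /\ 0 < b ^ 3 - logmean (a ^ 3) (b ^ 3).
Proof.
  assert (0 < a ^ 3) by (apply pow_lt; lra).
  assert (a ^ 3 < b ^ 3) by (apply cube_lt; lra).
  destruct (logmean_between (a ^ 3) (b ^ 3)) as [Hlo Hhi]; [lra |].
  split; [apply Rmult_lt_0_compat |]; lra.
Qed.

Lemma estimate_degenerate : endpoint_mass a b m A B <= 0 ->
  Rabs (F b - F a) <= 0.
Proof.
  unfold endpoint_mass; intros HS; destruct weights_pos as [HwB HwA].
  assert (A = 0 /\ B = 0) as [-> ->] by (split; nra).
  enough (Rabs (F b - F a) <= 0 - 0) by lra.
  apply (deriv_comparison F (fun x => x ^ 2 * w x / 2) (fun _ => 0) (fun _ => 0));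
    auto.
  - intros; apply derivable_pt_lim_const.
  - intros x Hx.
    assert (w x = 0) as ->.
    { apply Rabs_eq_0, (rpow_le0_eq0 _ q); [apply Rabs_pos |].
      specialize (Hw x Hx); lra. }
    unfold Rdiv; rewrite Rmult_0_r, Rmult_0_l, Rabs_R0; lra.
Qed.

Lemma estimate_positive : 0 < endpoint_mass a b m A B ->
  Rabs (F b - F a) <=
  rpow (b ^ 3 - a ^ 3) (1 - 1 / q) / 6 * rpow (endpoint_mass a b m A B) (1 / q).
Proof.
  set (S := endpoint_mass a b m A B); intros HS.
  assert (HD : 0 < b ^ 3 - a ^ 3)
    by (assert (a ^ 3 < b ^ 3) by (apply cube_lt; lra); lra).
  assert (ln a < ln b) by (apply ln_increasing; lra).
  set (K := S / (b ^ 3 - a ^ 3)).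
  assert (HK : 0 < K) by (apply Rdiv_lt_0_compat; lra).
  set (k := Rpower K (1 / q)).
  assert (Hk : 0 < k) by apply exp_pos.
  assert (HkK : Rpower k q = K).
  { unfold k; rewrite Rpower_mult.
    replace (1 / q * q) with 1 by (field; lra); apply Rpower_1; lra. }
  assert (Hpow : rpow (b ^ 3 - a ^ 3) (1 - 1 / q) * rpow S (1 / q)
                 = k * (b ^ 3 - a ^ 3))
    by (rewrite <- rpow_split by lra; unfold k, K; ring).
  replace (rpow (b ^ 3 - a ^ 3) (1 - 1 / q) / 6 * rpow S (1 / q))
    with (k * (b ^ 3 - a ^ 3) / 6) by (rewrite <- Hpow; field).
  rewrite <- (majorant_increment a b m q A B k K);
    [| lra | lra | fold S; lra | reflexivity].
  apply (deriv_comparison F (fun x => x ^ 2 * w x / 2) (majorant a b m q A B k K)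
    (fun x => k / 2 * x ^ 2 * ((log_weight a b x * A
       + m * (1 - log_weight a b x) * B) / (q * K) + 1 - 1 / q))); auto.
  - intros x Hx; apply majorant_deriv; lra.
  - intros x Hx.
    pose proof (rpow_root_tangent _ k K _ q (Rabs_pos _) Hk Hq HkK (Hw x Hx))
      as Htan.
    assert (0 <= x ^ 2) by (apply pow_le; lra).
    rewrite Rabs_div, Rabs_mult, (Rabs_pos_eq (x ^ 2)), (Rabs_pos_eq 2) by lra.
    apply Rmult_le_compat_l with (r := x ^ 2 / 2) in Htan; [| lra].
    unfold Rdiv in *; nra.
Qed.

Lemma GA_estimate :
  Rabs (F b - F a) <=
  rpow (b ^ 3 - a ^ 3) (1 - 1 / q) / 6 * rpow (endpoint_mass a b m A B) (1 / q).
Proof.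
  destruct (Rle_lt_dec (endpoint_mass a b m A B) 0) as [HS | HS].
  - pose proof (rpow_ge0 (b ^ 3 - a ^ 3) (1 - 1 / q)).
    pose proof (rpow_ge0 (endpoint_mass a b m A B) (1 / q)).
    pose proof (estimate_degenerate HS); nra.
  - exact (estimate_positive HS).
Qed.

End GAEstimate.

Theorem corollary3p2 (f fp : R -> R) (a b m q : R)
  (Hd0 : right_deriv f 0 (fp 0))
  (Hd : forall x, 0 < x -> derivable_pt_lim f x (fp x))
  (Ha : 0 < a) (Hab : a < b)
  (Hm : 0 < m <= 1) (Hq : 1 <= q)
  (Hconv : GA_convex 1 m (Rmax (rpow a (1 / m)) b)
             (fun x => rpow (Rabs (fp x)) q))
  (pr : Riemann_integrable (fun x => x * f x) a b) :
  Rabs ((b ^ 2 * f b - a ^ 2 * f a) / 2 - RiemannInt pr)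
  <= rpow (b ^ 3 - a ^ 3) (1 - 1 / q) / 6 *
     rpow (m * (logmean (a ^ 3) (b ^ 3) - a ^ 3)
             * rpow (Rabs (fp (rpow a (1 / m)))) q
           + (b ^ 3 - logmean (a ^ 3) (b ^ 3)) * rpow (Rabs (fp b)) q)
          (1 / q).
Proof.
  set (F := fun y => y ^ 2 * f y / 2 - RInt (fun s => s * f s) a y).
  assert (Hboundary : (b ^ 2 * f b - a ^ 2 * f a) / 2 - RiemannInt pr = F b - F a).
  { rewrite <- (RInt_Reals _ _ _ pr); unfold F.
    assert (RInt (fun s => s * f s) a a = 0) as ->
      by apply (@RInt_point R_CompleteNormedModule).
    field. }
  rewrite Hboundary.
  apply (GA_estimate a b m q _ _ F fp); auto; try lra; try apply rpow_ge0.
  - intros x Hx; apply boundary_term_deriv; auto; lra.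
  - intros x Hx; apply GA_convex_log_interpolation; auto; lra.
Qed.
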